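(* Let $\gamma>-1/2$. For every $a\in\mathbb{C}$ with $\operatorname{Im}(a)\neq0$, \[ (2\gamma+1)\frac{|{}_1F_1(\gamma;2\gamma+1;ia)|^2-|{}_1F_1(1+\gamma;2\gamma+1;ia)|^2}{2\operatorname{Im}(a)}>0, \] and for every $a\in\mathbb{R}$, $T(a)>0$, where \[ T(a)={}_1F_1(1+\gamma;2\gamma+1;-ia)\,{}_1F_1(2+\gamma;2\gamma+2;ia)(1+\gamma)-{}_1F_1(\gamma;2\gamma+1;-ia)\,{}_1F_1(1+\gamma;2\gamma+2;ia)\,\gamma . \]
   Context: ${}_1F_1(\alpha;\beta;z)=\sum_{k\ge0}\frac{(\alpha)_k}{(\beta)_k}\frac{z^k}{k!}$ is the confluent hypergeometric function, with $(v)_k$ the rising factorial. (For real $a$ the paper interprets the displayed quotient as $T(a)$.) *)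

From Stdlib Require Import Reals Factorial.
From Coquelicot Require Import Coquelicot.
Open Scope R_scope.

Fixpoint poch (v : C) (k : nat) : C :=
  match k with
  | O => RtoC 1
  | S k' => Cmult (poch v k') (Cplus v (RtoC (INR k')))
  end.

Fixpoint cpow (z : C) (k : nat) : C :=
  match k with
  | O => RtoC 1
  | S k' => Cmult (cpow z k') z
  end.

Definition hyp1F1_term (alpha beta z : C) (k : nat) : C :=
  Cdiv (Cmult (Cdiv (poch alpha k) (poch beta k)) (cpow z k)) (RtoC (INR (Factorial.fact k))).

Definition hyp1F1 (alpha beta z : C) : C :=
  (Series (fun k => Re (hyp1F1_term alpha beta z k)),
   Series (fun k => Im (hyp1F1_term alpha beta z k))).

Definition Tq (g a : R) : C :=
  Cminus
    (Cmult (Cmult (hyp1F1 (RtoC (1 + g)) (RtoC (2 * g + 1)) (Cmult (RtoC (- a)) Ci))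
                  (hyp1F1 (RtoC (2 + g)) (RtoC (2 * g + 2)) (Cmult (RtoC a) Ci)))
           (RtoC (1 + g)))
    (Cmult (Cmult (hyp1F1 (RtoC g) (RtoC (2 * g + 1)) (Cmult (RtoC (- a)) Ci))
                  (hyp1F1 (RtoC (1 + g)) (RtoC (2 * g + 2)) (Cmult (RtoC a) Ci)))
           (RtoC g)).

From Stdlib Require Import Reals Factorial Lra Psatz.
From Coquelicot Require Import Coquelicot.
Open Scope R_scope.

(* Put U(s) = 1F1(g; 2g+1; s z) and V(s) = 1F1(1+g; 2g+1; s z). The contiguous relations of
   1F1 give the first-order system
     s U' = g (V - U),    s V' = g (U - V) + s z V,
   so W = |U|^2 - |V|^2 ([mod2_diff]) solves s W' + 2g W = -2 Re(z) s |V|^2 with W(0) = 0 and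
   W'(0) = -2 Re(z) / (2g+1). As s^(2g) W is monotone on (0, 1], W(1) has the sign of -Re z;
   for z = i a this is the first claim.
   For real a and z = i a, the derivative formula 1F1(al; be)' = (al/be) 1F1(al+1; be+1)
   expresses T(a) through U, V and their derivatives at s = 1: Im T(a) is a multiple of W(1),
   which vanishes since Re z = 0, and Re T(a) = (2g+1) L(1) with
   L = s |V|^2 + (2g/a) Im(conj(V) U) ([re_T_fun]), which solves s L' + 2g L = s |V|^2 with
   L(0) = 0 and L'(0) = 1/(2g+1) > 0. *)

Fixpoint rpoch (r : R) (k : nat) : R :=
  match k with O => 1 | S k' => rpoch r k' * (r + INR k') end.

Lemma poch_RtoC (r : R) (k : nat) : poch (RtoC r) k = RtoC (rpoch r k).
Proof.
  induction k as [|k IH]; simpl; [reflexivity|].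
  now rewrite IH, <- RtoC_plus, <- RtoC_mult.
Qed.

Lemma rpoch_pos (r : R) (k : nat) : 0 < r -> 0 < rpoch r k.
Proof.
  intros Hr; induction k as [|k IH]; simpl; [lra|].
  pose proof (pos_INR k); apply Rmult_lt_0_compat; lra.
Qed.

Lemma rpoch_S_shift (r : R) (k : nat) : rpoch r (S k) = r * rpoch (r + 1) k.
Proof.
  induction k as [|k IH]; [simpl; ring|].
  change (rpoch r (S (S k))) with (rpoch r (S k) * (r + INR (S k))).
  simpl rpoch at 2; rewrite IH, S_INR; ring.
Qed.

Lemma INR_fact_S (n : nat) : INR (fact (S n)) = (INR n + 1) * INR (fact n).
Proof. change (fact (S n)) with (S n * fact n)%nat; rewrite mult_INR, S_INR; ring. Qed.

Definition hyp_coef (al be : R) (n : nat) : R := rpoch al n / rpoch be n / INR (fact n).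

Lemma hyp_coef_0 (al be : R) : hyp_coef al be 0 = 1.
Proof. unfold hyp_coef; simpl; field. Qed.

Lemma hyp_coef_1 (al be : R) : 0 < be -> hyp_coef al be 1 = al / be.
Proof. intros Hbe; unfold hyp_coef; simpl; field; lra. Qed.

Lemma hyp_coef_S (al be : R) (n : nat) : 0 < be ->
  hyp_coef al be (S n) = hyp_coef al be n * ((al + INR n) / ((be + INR n) * (INR n + 1))).
Proof.
  intros Hbe; unfold hyp_coef; rewrite INR_fact_S; simpl rpoch.
  pose proof (rpoch_pos be n Hbe); pose proof (INR_fact_neq_0 n); pose proof (pos_INR n).
  field; repeat split; lra.
Qed.

Lemma hyp_coef_abs_le (al be : R) (n : nat) : 0 < be ->
  Rabs (hyp_coef al be n) <= (1 + Rabs al / be) ^ n / INR (fact n).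
Proof.
  intros Hbe; induction n as [|n IH].
  - rewrite hyp_coef_0; simpl; rewrite Rabs_R1; lra.
  - rewrite hyp_coef_S, Rabs_mult, INR_fact_S by exact Hbe.
    pose proof (pos_INR n); pose proof (INR_fact_lt_0 n); pose proof (Rabs_pos al).
    assert (Hm : 0 <= Rabs al / be) by (apply Rdiv_le_0_compat; lra).
    assert (Hratio : Rabs ((al + INR n) / ((be + INR n) * (INR n + 1)))
                     <= (1 + Rabs al / be) / (INR n + 1)).
    { rewrite Rabs_div, (Rabs_pos_eq ((be + INR n) * (INR n + 1))) by nra.
      apply (Rmult_le_reg_r ((be + INR n) * (INR n + 1))); [nra|].
      unfold Rdiv; rewrite Rmult_assoc, Rinv_l, Rmult_1_r by nra.
      pose proof (Rabs_triang al (INR n)); rewrite (Rabs_pos_eq (INR n)) in * by lra.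
      replace ((1 + Rabs al * / be) * / (INR n + 1) * ((be + INR n) * (INR n + 1)))
        with (be + INR n + Rabs al + Rabs al / be * INR n) by (field; lra).
      nra. }
    replace ((1 + Rabs al / be) ^ S n / ((INR n + 1) * INR (fact n)))
      with ((1 + Rabs al / be) ^ n / INR (fact n) * ((1 + Rabs al / be) / (INR n + 1)))
      by (simpl; field; lra).
    apply Rmult_le_compat; auto using Rabs_pos.
Qed.

Lemma hyp_coef_raise (al be : R) (n : nat) : 0 < be ->
  INR n * hyp_coef al be n = al * (hyp_coef (al + 1) be n - hyp_coef al be n).
Proof.
  intros Hbe; unfold hyp_coef.
  assert (H : al * rpoch (al + 1) n = rpoch al n * (al + INR n))
    by (rewrite <- rpoch_S_shift; reflexivity).
  pose proof (rpoch_pos be n Hbe); pose proof (INR_fact_neq_0 n).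
  apply (Rmult_eq_reg_r (rpoch be n * INR (fact n))); [|nra].
  field_simplify; [|lra|lra]. rewrite H; ring.
Qed.

Lemma hyp_coef_lower (al be : R) (n : nat) : 0 < be ->
  INR (S n) * hyp_coef (al + 1) be (S n)
  = (be - al - 1) * (hyp_coef al be (S n) - hyp_coef (al + 1) be (S n)) + hyp_coef (al + 1) be n.
Proof.
  intros Hbe; unfold hyp_coef; rewrite !INR_fact_S, !S_INR, (rpoch_S_shift al n); simpl rpoch.
  pose proof (rpoch_pos be n Hbe); pose proof (INR_fact_neq_0 n); pose proof (pos_INR n).
  field; repeat split; lra.
Qed.

Lemma hyp_coef_derive (al be : R) (n : nat) : 0 < be ->
  be * (INR (S n) * hyp_coef al be (S n)) = al * hyp_coef (al + 1) (be + 1) n.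
Proof.
  intros Hbe; unfold hyp_coef.
  rewrite !INR_fact_S, !S_INR, (rpoch_S_shift al n), (rpoch_S_shift be n).
  pose proof (rpoch_pos (be + 1) n ltac:(lra)); pose proof (INR_fact_neq_0 n).
  pose proof (pos_INR n).
  field; repeat split; lra.
Qed.

Definition re_pow (z : C) (n : nat) : R := Re (cpow z n).
Definition im_pow (z : C) (n : nat) : R := Im (cpow z n).

Lemma re_pow_S (z : C) (n : nat) : re_pow z (S n) = re_pow z n * Re z - im_pow z n * Im z.
Proof. unfold re_pow, im_pow; simpl; destruct (cpow z n), z; reflexivity. Qed.

Lemma im_pow_S (z : C) (n : nat) : im_pow z (S n) = re_pow z n * Im z + im_pow z n * Re z.
Proof. unfold re_pow, im_pow; simpl; destruct (cpow z n), z; reflexivity. Qed.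

Lemma re_pow_0 (z : C) : re_pow z 0 = 1.
Proof. reflexivity. Qed.

Lemma im_pow_0 (z : C) : im_pow z 0 = 0.
Proof. reflexivity. Qed.

Lemma re_pow_1 (z : C) : re_pow z 1 = Re z.
Proof. rewrite re_pow_S, re_pow_0, im_pow_0; ring. Qed.

Lemma im_pow_1 (z : C) : im_pow z 1 = Im z.
Proof. rewrite im_pow_S, re_pow_0, im_pow_0; ring. Qed.

Lemma Cmod_cpow (z : C) (n : nat) : Cmod (cpow z n) = Cmod z ^ n.
Proof. induction n as [|n IH]; simpl; [apply Cmod_1|]; rewrite Cmod_mult, IH; ring. Qed.

Lemma im_le_Cmod (c : C) : Rabs (Im c) <= Cmod c.
Proof.
  rewrite <- (Rabs_pos_eq (Cmod c)) by apply Cmod_ge_0.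
  apply Rsqr_le_abs_0; unfold Rsqr.
  pose proof (Cmod2_alt c); pose proof (pow2_ge_0 (Re c)); simpl in *; lra.
Qed.

Definition geom_bounded (w : nat -> R) : Prop :=
  exists K M : R, forall n, Rabs (w n) <= K * M ^ n.

Lemma geom_bounded_shift (w : nat -> R) : geom_bounded w -> geom_bounded (fun n => w (S n)).
Proof. intros (K & M & H); exists (K * M), M; intros n; rewrite Rmult_assoc; apply H. Qed.

Lemma geom_bounded_re_pow (z : C) : geom_bounded (re_pow z).
Proof.
  exists 1, (Cmod z); intros n; rewrite Rmult_1_l, <- Cmod_cpow; apply re_le_Cmod.
Qed.

Lemma geom_bounded_im_pow (z : C) : geom_bounded (im_pow z).
Proof.
  exists 1, (Cmod z); intros n; rewrite Rmult_1_l, <- Cmod_cpow; apply im_le_Cmod.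
Qed.

Lemma CV_radius_infinite_le (a b : nat -> R) :
  (forall n, Rabs (a n) <= Rabs (b n)) -> CV_radius b = p_infty -> CV_radius a = p_infty.
Proof.
  intros Hab Hb.
  destruct (CV_radius_bounded a) as [Ha_ub _]; destruct (CV_radius_bounded b) as [_ Hb_lub].
  rewrite Hb in Hb_lub.
  assert (Hle : Rbar_le p_infty (CV_radius a)).
  { apply Hb_lub; intros x [C HC]; apply Ha_ub; exists C; intros n.
    eapply Rle_trans; [|apply (HC n)]; rewrite !Rabs_mult.
    apply Rmult_le_compat_r; [apply Rabs_pos|apply Hab]. }
  destruct (CV_radius a); simpl in Hle; tauto.
Qed.

Lemma CV_radius_pow_div_fact (K : R) : 0 < K -> CV_radius (fun n => K ^ n / INR (fact n)) = p_infty.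
Proof.
  intros HK; apply CV_radius_infinite_DAlembert.
  - intros n; apply Rgt_not_eq, Rdiv_lt_0_compat; [apply pow_lt; lra|apply INR_fact_lt_0].
  - apply is_lim_seq_ext with (u := fun n => K * / (INR n + 1)).
    + intros n; rewrite INR_fact_S; pose proof (pos_INR n); pose proof (INR_fact_lt_0 n).
      rewrite Rabs_pos_eq; [simpl; field; split; [lra|split; [lra|apply pow_nonzero; lra]]|].
      apply Rlt_le, Rdiv_lt_0_compat; apply Rdiv_lt_0_compat; try apply pow_lt; nra.
    + replace (Finite 0) with (Rbar_mult K (Rbar_inv p_infty)) by (simpl; f_equal; ring).
      apply is_lim_seq_scal_l, is_lim_seq_inv; [|discriminate].
      eapply is_lim_seq_plus; [apply is_lim_seq_INR|apply is_lim_seq_const|constructor].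
Qed.

Lemma CV_radius_hyp (al be : R) (w : nat -> R) : 0 < be -> geom_bounded w ->
  CV_radius (fun n => hyp_coef al be n * w n) = p_infty.
Proof.
  intros Hbe (K & M & Hw).
  set (m := 1 + Rabs al / be).
  assert (Hm : 1 <= m) by (unfold m; pose proof (Rabs_pos al);
                           assert (0 <= Rabs al / be) by (apply Rdiv_le_0_compat; lra); lra).
  apply CV_radius_infinite_le
    with (b := fun n => (Rabs K + 1) * ((m * (Rabs M + 1)) ^ n / INR (fact n))).
  - intros n; pose proof (INR_fact_lt_0 n); pose proof (Rabs_pos M); pose proof (Rabs_pos K).
    rewrite Rabs_mult, (Rabs_pos_eq (_ * _))
      by (apply Rmult_le_pos; [lra|apply Rlt_le, Rdiv_lt_0_compat; [apply pow_lt; nra|lra]]).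
    assert (HwM : Rabs (w n) <= (Rabs K + 1) * (Rabs M + 1) ^ n).
    { eapply Rle_trans; [apply Hw|]; eapply Rle_trans; [apply Rle_abs|].
      rewrite Rabs_mult, <- RPow_abs.
      apply Rmult_le_compat; [apply Rabs_pos|apply pow_le, Rabs_pos|lra|].
      apply pow_incr; split; [apply Rabs_pos|lra]. }
    rewrite Rpow_mult_distr.
    replace ((Rabs K + 1) * (m ^ n * (Rabs M + 1) ^ n / INR (fact n)))
      with (m ^ n / INR (fact n) * ((Rabs K + 1) * (Rabs M + 1) ^ n)) by (field; lra).
    apply Rmult_le_compat; try apply Rabs_pos; [apply hyp_coef_abs_le, Hbe|exact HwM].
  - rewrite (CV_radius_ext _
      (PS_scal (Rabs K + 1) (fun n => (m * (Rabs M + 1)) ^ n / INR (fact n))))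
      by reflexivity.
    rewrite CV_radius_scal by (pose proof (Rabs_pos K); lra).
    apply CV_radius_pow_div_fact; pose proof (Rabs_pos M); nra.
Qed.

Lemma ex_pseries_lin (a b : nat -> R) (x y s : R) : ex_pseries a s -> ex_pseries b s ->
  ex_pseries (fun n => x * a n + y * b n) s.
Proof.
  intros Ha Hb.
  apply (ex_pseries_ext (PS_plus (PS_scal x a) (PS_scal y b))); [reflexivity|].
  apply ex_pseries_plus; apply ex_pseries_scal; auto; apply Rmult_comm.
Qed.

Lemma PSeries_lin (a b : nat -> R) (x y s : R) : ex_pseries a s -> ex_pseries b s ->
  PSeries (fun n => x * a n + y * b n) s = x * PSeries a s + y * PSeries b s.
Proof.
  intros Ha Hb.
  rewrite <- (PSeries_scal x a), <- (PSeries_scal y b), <- PSeries_plus.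
  - apply PSeries_ext; reflexivity.
  - apply ex_pseries_scal; auto; apply Rmult_comm.
  - apply ex_pseries_scal; auto; apply Rmult_comm.
Qed.

Lemma PSeries_mult_derive (a : nat -> R) (s : R) :
  s * PSeries (PS_derive a) s = PSeries (fun n => INR n * a n) s.
Proof.
  rewrite <- PSeries_incr_1; apply PSeries_ext; intros [|n]; simpl; [|reflexivity].
  unfold zero; simpl; ring.
Qed.

(* For real parameters, [hyp_ser al be (re_pow z) s] and [hyp_ser al be (im_pow z) s] are the
   real and imaginary parts of 1F1(al; be; s z) (see [hyp1F1_RtoC]). *)
Definition hyp_ser (al be : R) (w : nat -> R) (s : R) : R :=
  PSeries (fun n => hyp_coef al be n * w n) s.

Definition hyp_ser_deriv (al be : R) (w : nat -> R) (s : R) : R :=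
  PSeries (PS_derive (fun n => hyp_coef al be n * w n)) s.

Lemma ex_pseries_hyp (al be : R) (w : nat -> R) (s : R) : 0 < be -> geom_bounded w ->
  ex_pseries (fun n => hyp_coef al be n * w n) s.
Proof. intros Hbe Hw; apply CV_radius_inside; rewrite CV_radius_hyp; easy. Qed.

Lemma is_derive_hyp_ser (al be : R) (w : nat -> R) (s : R) : 0 < be -> geom_bounded w ->
  is_derive (hyp_ser al be w) s (hyp_ser_deriv al be w s).
Proof. intros Hbe Hw; apply is_derive_PSeries; rewrite CV_radius_hyp; easy. Qed.

Lemma Derive_hyp_ser (al be : R) (w : nat -> R) (s : R) : 0 < be -> geom_bounded w ->
  Derive (hyp_ser al be w) s = hyp_ser_deriv al be w s.
Proof. intros Hbe Hw; apply is_derive_unique, is_derive_hyp_ser; auto. Qed.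

Lemma hyp_ser_at_0 (al be : R) (w : nat -> R) : hyp_ser al be w 0 = w 0%nat.
Proof. unfold hyp_ser; rewrite PSeries_0, hyp_coef_0; ring. Qed.

Lemma hyp_ser_deriv_at_0 (al be : R) (w : nat -> R) : 0 < be ->
  hyp_ser_deriv al be w 0 = al / be * w 1%nat.
Proof.
  intros Hbe; unfold hyp_ser_deriv, PS_derive.
  rewrite PSeries_0, hyp_coef_1 by exact Hbe; simpl; ring.
Qed.

Lemma hyp_ser_lin (al be : R) (w1 w2 : nat -> R) (x y s : R) :
  0 < be -> geom_bounded w1 -> geom_bounded w2 ->
  hyp_ser al be (fun n => x * w1 n + y * w2 n) s = x * hyp_ser al be w1 s + y * hyp_ser al be w2 s.
Proof.
  intros Hbe H1 H2; unfold hyp_ser; rewrite <- PSeries_lin by (apply ex_pseries_hyp; auto).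
  apply PSeries_ext; intros n; ring.
Qed.

Lemma hyp_ser_opp (al be : R) (w : nat -> R) (s : R) :
  hyp_ser al be (fun n => - w n) s = - hyp_ser al be w s.
Proof.
  unfold hyp_ser; rewrite <- PSeries_opp; apply PSeries_ext; intros n; unfold PS_opp; simpl.
  unfold opp; simpl; ring.
Qed.

Lemma hyp_ser_euler_raise (al be : R) (w : nat -> R) (s : R) : 0 < be -> geom_bounded w ->
  s * hyp_ser_deriv al be w s = al * (hyp_ser (al + 1) be w s - hyp_ser al be w s).
Proof.
  intros Hbe Hw; unfold hyp_ser_deriv; rewrite PSeries_mult_derive.
  rewrite (PSeries_ext _
    (fun n => al * (hyp_coef (al + 1) be n * w n) + - al * (hyp_coef al be n * w n))).
  - unfold hyp_ser; rewrite PSeries_lin by (apply ex_pseries_hyp; auto); ring.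
  - intros n; rewrite <- Rmult_assoc, hyp_coef_raise by exact Hbe; ring.
Qed.

Lemma hyp_ser_euler_lower (al be : R) (w : nat -> R) (s : R) : 0 < be -> geom_bounded w ->
  s * hyp_ser_deriv (al + 1) be w s
  = (be - al - 1) * (hyp_ser al be w s - hyp_ser (al + 1) be w s)
    + s * hyp_ser (al + 1) be (fun n => w (S n)) s.
Proof.
  intros Hbe Hw; unfold hyp_ser_deriv, hyp_ser; rewrite PSeries_mult_derive, <- PSeries_incr_1.
  set (c := be - al - 1).
  assert (Hex : forall a, ex_pseries (fun n => hyp_coef a be n * w n) s)
    by (intros; apply ex_pseries_hyp; auto).
  rewrite (PSeries_ext _
    (fun n => 1 * (c * (hyp_coef al be n * w n) + - c * (hyp_coef (al + 1) be n * w n))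
              + 1 * PS_incr_1 (fun n => hyp_coef (al + 1) be n * w (S n)) n)).
  - rewrite PSeries_lin, PSeries_lin; auto.
    + ring.
    + apply ex_pseries_lin; auto.
    + apply ex_pseries_incr_1, ex_pseries_hyp; auto using geom_bounded_shift.
  - intros [|n]; simpl PS_incr_1.
    + rewrite !hyp_coef_0; unfold zero; simpl; ring.
    + rewrite <- Rmult_assoc, hyp_coef_lower by exact Hbe; unfold c; ring.
Qed.

Lemma hyp_ser_deriv_shift (al be : R) (w : nat -> R) (s : R) : 0 < be ->
  be * hyp_ser_deriv al be w s = al * hyp_ser (al + 1) (be + 1) (fun n => w (S n)) s.
Proof.
  intros Hbe; unfold hyp_ser_deriv, hyp_ser; rewrite <- !PSeries_scal.
  apply PSeries_ext; intros n; unfold PS_scal, PS_derive; change (scal ?x ?y) with (x * y).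
  transitivity (be * (INR (S n) * hyp_coef al be (S n)) * w (S n)); [ring|].
  rewrite hyp_coef_derive by exact Hbe; ring.
Qed.

Lemma exists_pos_of_deriv_pos (f : R -> R) (l : R) :
  is_derive f 0 l -> 0 < l -> f 0 = 0 -> exists e, 0 < e < 1 /\ 0 < f e.
Proof.
  intros Hd Hl H0; apply is_derive_Reals in Hd.
  destruct (Hd (l / 2) ltac:(lra)) as [d Hdd]; pose proof (cond_pos d).
  set (h := Rmin (d / 2) (1 / 2)).
  assert (Hh : 0 < h) by (apply Rmin_pos; lra).
  assert (Hhd : h <= d / 2) by apply Rmin_l; assert (Hh1 : h <= 1 / 2) by apply Rmin_r.
  exists h; split; [lra|].
  specialize (Hdd h ltac:(lra) ltac:(rewrite Rabs_pos_eq; lra)).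
  rewrite Rplus_0_l, H0, Rminus_0_r in Hdd; apply Rabs_def2 in Hdd.
  replace (f h) with (f h / h * h) by (field; lra); apply Rmult_lt_0_compat; lra.
Qed.

(* s^c f(s) is nondecreasing on (0, 1] and positive just right of 0. *)
Lemma euler_ineq_pos (c : R) (f f' : R -> R) :
  (forall s, is_derive f s (f' s)) -> f 0 = 0 -> 0 < f' 0 ->
  (forall s, 0 < s <= 1 -> 0 <= s * f' s + c * f s) -> 0 < f 1.
Proof.
  intros Hd H0 Hf'0 Hs.
  destruct (exists_pos_of_deriv_pos f (f' 0) (Hd 0) Hf'0 H0) as [e [He Hfe]].
  set (F := fun s => exp (c * ln s) * f s).
  set (F' := fun s => exp (c * ln s) * / s * (s * f' s + c * f s)).
  destruct (MVT_cor2 F F' e 1) as [xi [Hxi1 Hxi2]]; [lra| |].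
  - intros s Hs'; apply is_derive_Reals; unfold F, F'; auto_derive.
    + repeat split; [lra|exists (f' s); apply Hd].
    + replace (Derive (fun x => f x) s) with (f' s) by (symmetry; apply is_derive_unique, Hd).
      field; lra.
  - assert (0 <= F' xi).
    { apply Rmult_le_pos; [apply Rmult_le_pos|apply Hs; lra].
      - apply Rlt_le, exp_pos.
      - apply Rlt_le, Rinv_0_lt_compat; lra. }
    assert (0 < F e) by (apply Rmult_lt_0_compat; [apply exp_pos|exact Hfe]).
    assert (F 1 = f 1) by (unfold F; rewrite ln_1, Rmult_0_r, exp_0; ring).
    assert (0 <= F' xi * (1 - e)) by (apply Rmult_le_pos; lra).
    lra.
Qed.

(* Perturb f by d s with d = -f(1)/2: since c > -1 the perturbation keeps the inequality. *)
Lemma euler_ineq_nonneg (c : R) (f f' : R -> R) : -1 < c ->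
  (forall s, is_derive f s (f' s)) -> f 0 = 0 -> 0 <= f' 0 ->
  (forall s, 0 < s <= 1 -> 0 <= s * f' s + c * f s) -> 0 <= f 1.
Proof.
  intros Hc Hd H0 Hf'0 Hs; apply Rnot_lt_le; intros Hneg.
  set (d := - f 1 / 2).
  assert (0 < f 1 + d * 1); [|unfold d in *; lra].
  apply (euler_ineq_pos c (fun t => f t + d * t) (fun t => f' t + d)).
  - intros s; apply (is_derive_plus f (fun t => d * t)); [apply Hd|].
    auto_derive; [exact I|ring].
  - rewrite H0; ring.
  - unfold d; lra.
  - intros s Hs'; specialize (Hs s Hs').
    replace (s * (f' s + d) + c * (f s + d * s))
      with ((s * f' s + c * f s) + d * s * (1 + c)) by ring.
    assert (0 <= d * s * (1 + c)) by (apply Rmult_le_pos; [apply Rmult_le_pos|]; unfold d; lra).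
    lra.
Qed.

Lemma euler_eq_zero (c : R) (f f' : R -> R) : -1 < c ->
  (forall s, is_derive f s (f' s)) -> f 0 = 0 -> f' 0 = 0 ->
  (forall s, 0 < s <= 1 -> s * f' s + c * f s = 0) -> f 1 = 0.
Proof.
  intros Hc Hd H0 Hf'0 Hs.
  assert (0 <= f 1).
  { apply (euler_ineq_nonneg c f f'); auto; [lra|intros s Hs'; rewrite Hs; auto; lra]. }
  assert (0 <= - f 1); [|lra].
  apply (euler_ineq_nonneg c (fun t => - f t) (fun t => - f' t)); auto.
  - intros s; apply (is_derive_opp f), Hd.
  - rewrite H0; ring.
  - lra.
  - intros s Hs'; specialize (Hs s Hs'); lra.
Qed.

Lemma hyp_ser_shift_re (al be : R) (z : C) (s : R) : 0 < be ->
  hyp_ser al be (fun n => re_pow z (S n)) s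
  = Re z * hyp_ser al be (re_pow z) s - Im z * hyp_ser al be (im_pow z) s.
Proof.
  intros Hbe; unfold Rminus; rewrite Ropp_mult_distr_l.
  rewrite <- hyp_ser_lin by auto using geom_bounded_re_pow, geom_bounded_im_pow.
  unfold hyp_ser; apply PSeries_ext; intros n; rewrite re_pow_S; ring.
Qed.

Lemma hyp_ser_shift_im (al be : R) (z : C) (s : R) : 0 < be ->
  hyp_ser al be (fun n => im_pow z (S n)) s
  = Im z * hyp_ser al be (re_pow z) s + Re z * hyp_ser al be (im_pow z) s.
Proof.
  intros Hbe; rewrite <- hyp_ser_lin by auto using geom_bounded_re_pow, geom_bounded_im_pow.
  unfold hyp_ser; apply PSeries_ext; intros n; rewrite im_pow_S; ring.
Qed.

Lemma hyp_ser_deriv_re (al be : R) (z : C) (s : R) : 0 < be ->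
  be * hyp_ser_deriv al be (re_pow z) s
  = al * (Re z * hyp_ser (al + 1) (be + 1) (re_pow z) s
          - Im z * hyp_ser (al + 1) (be + 1) (im_pow z) s).
Proof. intros Hbe; rewrite hyp_ser_deriv_shift, hyp_ser_shift_re by lra; reflexivity. Qed.

Lemma hyp_ser_deriv_im (al be : R) (z : C) (s : R) : 0 < be ->
  be * hyp_ser_deriv al be (im_pow z) s
  = al * (Im z * hyp_ser (al + 1) (be + 1) (re_pow z) s
          + Re z * hyp_ser (al + 1) (be + 1) (im_pow z) s).
Proof. intros Hbe; rewrite hyp_ser_deriv_shift, hyp_ser_shift_im by lra; reflexivity. Qed.

Lemma hyp1F1_term_RtoC (al be : R) (z : C) (n : nat) : 0 < be ->
  hyp1F1_term (RtoC al) (RtoC be) z n = Cmult (RtoC (hyp_coef al be n)) (cpow z n).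
Proof.
  intros Hbe; unfold hyp1F1_term, hyp_coef; rewrite !poch_RtoC.
  pose proof (rpoch_pos be n Hbe); pose proof (INR_fact_neq_0 n).
  destruct (cpow z n) as [x y]; unfold Cdiv, Cmult, Cinv, RtoC; simpl.
  apply injective_projections; simpl; field; lra.
Qed.

Lemma hyp1F1_RtoC (al be : R) (z : C) : 0 < be ->
  hyp1F1 (RtoC al) (RtoC be) z = (hyp_ser al be (re_pow z) 1, hyp_ser al be (im_pow z) 1).
Proof.
  intros Hbe; unfold hyp1F1, hyp_ser, PSeries, re_pow, im_pow.
  f_equal; apply Series_ext; intros n; rewrite pow1, Rmult_1_r, hyp1F1_term_RtoC by exact Hbe;
    destruct (cpow z n); simpl; ring.
Qed.

Lemma cpow_conj (z : C) (n : nat) : cpow (Cconj z) n = Cconj (cpow z n).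
Proof.
  induction n as [|n IH]; simpl.
  - apply injective_projections; simpl; ring.
  - rewrite IH, Cmult_conj; reflexivity.
Qed.

Lemma hyp1F1_conj (al be : R) (z : C) : 0 < be ->
  hyp1F1 (RtoC al) (RtoC be) (Cconj z) = Cconj (hyp1F1 (RtoC al) (RtoC be) z).
Proof.
  intros Hbe; rewrite !hyp1F1_RtoC by exact Hbe.
  assert (Hre : hyp_ser al be (re_pow (Cconj z)) 1 = hyp_ser al be (re_pow z) 1).
  { unfold hyp_ser, re_pow; apply PSeries_ext; intros n; rewrite cpow_conj, re_conj; reflexivity. }
  assert (Him : hyp_ser al be (im_pow (Cconj z)) 1 = - hyp_ser al be (im_pow z) 1).
  { rewrite <- hyp_ser_opp; unfold hyp_ser, im_pow; apply PSeries_ext; intros n.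
    rewrite cpow_conj; reflexivity. }
  rewrite Hre, Him; reflexivity.
Qed.

Lemma hyp1F1_0 (al be : R) : 0 < be -> hyp1F1 (RtoC al) (RtoC be) (RtoC 0) = RtoC 1.
Proof.
  intros Hbe; rewrite hyp1F1_RtoC by exact Hbe.
  assert (Hval : forall w, geom_bounded w -> (forall n, w (S n) = 0) ->
                           hyp_ser al be w 1 = w 0%nat).
  { intros w Hw Hw0; unfold hyp_ser; rewrite PSeries_decr_1 by (apply ex_pseries_hyp; auto).
    rewrite (PSeries_ext _ (fun _ => 0)), PSeries_const_0, hyp_coef_0; [ring|].
    intros n; unfold PS_decr_1; rewrite Hw0; ring. }
  rewrite !Hval; auto using geom_bounded_re_pow, geom_bounded_im_pow.
  - intros n; rewrite im_pow_S; simpl; ring.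
  - intros n; rewrite re_pow_S; simpl; ring.
Qed.

Lemma Tq_at_0 (g : R) : -1/2 < g -> Tq g 0 = RtoC 1.
Proof.
  intros hg; unfold Tq.
  replace (Cmult (RtoC (- 0)) Ci) with (RtoC 0) by (apply injective_projections; simpl; ring).
  replace (Cmult (RtoC 0) Ci) with (RtoC 0) by (apply injective_projections; simpl; ring).
  rewrite !hyp1F1_0 by lra; apply injective_projections; simpl; ring.
Qed.

Section Kummer_pair.

Variables (g : R) (z : C).
Hypothesis hg : -1/2 < g.

Local Notation b := (2 * g + 1).
Local Notation U1 := (hyp_ser g b (re_pow z)).
Local Notation U2 := (hyp_ser g b (im_pow z)).
Local Notation V1 := (hyp_ser (1 + g) b (re_pow z)).
Local Notation V2 := (hyp_ser (1 + g) b (im_pow z)).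
Local Notation U1' := (hyp_ser_deriv g b (re_pow z)).
Local Notation U2' := (hyp_ser_deriv g b (im_pow z)).
Local Notation V1' := (hyp_ser_deriv (1 + g) b (re_pow z)).
Local Notation V2' := (hyp_ser_deriv (1 + g) b (im_pow z)).
Local Notation E1 := (hyp_ser (2 + g) (2 * g + 2) (re_pow z)).
Local Notation E2 := (hyp_ser (2 + g) (2 * g + 2) (im_pow z)).
Local Notation F1 := (hyp_ser (1 + g) (2 * g + 2) (re_pow z)).
Local Notation F2 := (hyp_ser (1 + g) (2 * g + 2) (im_pow z)).

Let b_pos : 0 < b.
Proof. lra. Qed.

Let geom_re : geom_bounded (re_pow z) := geom_bounded_re_pow z.
Let geom_im : geom_bounded (im_pow z) := geom_bounded_im_pow z.

Lemma ode_U (w : nat -> R) (s : R) : geom_bounded w ->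
  s * hyp_ser_deriv g b w s = g * (hyp_ser (1 + g) b w s - hyp_ser g b w s).
Proof. intros Hw; rewrite hyp_ser_euler_raise, (Rplus_comm 1 g) by auto; reflexivity. Qed.

Lemma ode_V (w : nat -> R) (s : R) : geom_bounded w ->
  s * hyp_ser_deriv (1 + g) b w s
  = g * (hyp_ser g b w s - hyp_ser (1 + g) b w s) + s * hyp_ser (1 + g) b (fun n => w (S n)) s.
Proof.
  intros Hw; rewrite (Rplus_comm 1 g), hyp_ser_euler_lower by auto.
  replace (2 * g + 1 - g - 1) with g by ring; reflexivity.
Qed.

Lemma ode_V1 (s : R) : s * V1' s = g * (U1 s - V1 s) + s * (Re z * V1 s - Im z * V2 s).
Proof. rewrite ode_V, hyp_ser_shift_re by auto; reflexivity. Qed.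

Lemma ode_V2 (s : R) : s * V2' s = g * (U2 s - V2 s) + s * (Im z * V1 s + Re z * V2 s).
Proof. rewrite ode_V, hyp_ser_shift_im by auto; reflexivity. Qed.

Lemma deriv_U_raise (s : R) :
  b * U1' s = g * (Re z * F1 s - Im z * F2 s) /\ b * U2' s = g * (Im z * F1 s + Re z * F2 s).
Proof.
  rewrite hyp_ser_deriv_re, hyp_ser_deriv_im by exact b_pos.
  replace (g + 1) with (1 + g) by ring; replace (b + 1) with (2 * g + 2) by ring; easy.
Qed.

Lemma deriv_V_raise (s : R) :
  b * V1' s = (1 + g) * (Re z * E1 s - Im z * E2 s) /\
  b * V2' s = (1 + g) * (Im z * E1 s + Re z * E2 s).
Proof.
  rewrite hyp_ser_deriv_re, hyp_ser_deriv_im by exact b_pos.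
  replace (1 + g + 1) with (2 + g) by ring; replace (b + 1) with (2 * g + 2) by ring; easy.
Qed.

Definition mod2_diff (s : R) : R := U1 s ^ 2 + U2 s ^ 2 - V1 s ^ 2 - V2 s ^ 2.

Definition mod2_diff' (s : R) : R :=
  2 * (U1 s * U1' s + U2 s * U2' s - V1 s * V1' s - V2 s * V2' s).

Lemma is_derive_mod2_diff (s : R) : is_derive mod2_diff s (mod2_diff' s).
Proof.
  unfold mod2_diff, mod2_diff'; auto_derive.
  - repeat split; eexists; apply is_derive_hyp_ser; auto.
  - rewrite !Derive_hyp_ser by auto; ring.
Qed.

Lemma mod2_diff_euler (s : R) :
  s * mod2_diff' s + 2 * g * mod2_diff s = -2 * Re z * s * (V1 s ^ 2 + V2 s ^ 2).
Proof.
  unfold mod2_diff, mod2_diff'.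
  transitivity (2 * (U1 s * (s * U1' s) + U2 s * (s * U2' s) - V1 s * (s * V1' s)
                     - V2 s * (s * V2' s)) + 2 * g * (U1 s ^ 2 + U2 s ^ 2 - V1 s ^ 2 - V2 s ^ 2));
    [ring|].
  rewrite !ode_U, ode_V1, ode_V2 by auto; ring.
Qed.

Lemma mod2_diff_at_0 : mod2_diff 0 = 0.
Proof. unfold mod2_diff; rewrite !hyp_ser_at_0, re_pow_0, im_pow_0; ring. Qed.

Lemma mod2_diff'_at_0 : mod2_diff' 0 = -2 * Re z / b.
Proof.
  unfold mod2_diff'; rewrite !hyp_ser_at_0, !hyp_ser_deriv_at_0, re_pow_0, im_pow_0, re_pow_1,
    im_pow_1 by exact b_pos.
  field; lra.
Qed.

Lemma mod2_diff_1_pos : Re z < 0 -> 0 < mod2_diff 1.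
Proof.
  intros Hz; apply (euler_ineq_pos (2 * g) mod2_diff mod2_diff').
  - exact is_derive_mod2_diff.
  - exact mod2_diff_at_0.
  - rewrite mod2_diff'_at_0; apply Rdiv_lt_0_compat; lra.
  - intros s Hs; rewrite mod2_diff_euler.
    pose proof (pow2_ge_0 (V1 s)); pose proof (pow2_ge_0 (V2 s)).
    apply Rmult_le_pos; [|lra]; apply Rmult_le_pos; lra.
Qed.

Lemma mod2_diff_1_neg : 0 < Re z -> mod2_diff 1 < 0.
Proof.
  intros Hz; cut (0 < - mod2_diff 1); [lra|].
  apply (euler_ineq_pos (2 * g) (fun s => - mod2_diff s) (fun s => - mod2_diff' s)).
  - intros s; apply (is_derive_opp mod2_diff), is_derive_mod2_diff.
  - rewrite mod2_diff_at_0; ring.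
  - rewrite mod2_diff'_at_0; replace (- (-2 * Re z / b)) with (2 * Re z / b) by (field; lra).
    apply Rdiv_lt_0_compat; lra.
  - intros s Hs; pose proof (mod2_diff_euler s); pose proof (pow2_ge_0 (V1 s));
      pose proof (pow2_ge_0 (V2 s)).
    assert (0 <= 2 * Re z * s * (V1 s ^ 2 + V2 s ^ 2))
      by (apply Rmult_le_pos; [apply Rmult_le_pos|]; lra).
    lra.
Qed.

Lemma mod2_diff_1_zero : Re z = 0 -> mod2_diff 1 = 0.
Proof.
  intros Hz; apply (euler_eq_zero (2 * g) mod2_diff mod2_diff'); [lra| | | |].
  - exact is_derive_mod2_diff.
  - exact mod2_diff_at_0.
  - rewrite mod2_diff'_at_0, Hz; field; lra.
  - intros s Hs; rewrite mod2_diff_euler, Hz; ring.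
Qed.

Definition re_T_fun (s : R) : R :=
  s * (V1 s ^ 2 + V2 s ^ 2) + 2 * g / Im z * (V1 s * U2 s - V2 s * U1 s).

Definition re_T_fun' (s : R) : R :=
  V1 s ^ 2 + V2 s ^ 2 + 2 * s * (V1 s * V1' s + V2 s * V2' s)
  + 2 * g / Im z * (V1' s * U2 s + V1 s * U2' s - V2' s * U1 s - V2 s * U1' s).

Lemma is_derive_re_T_fun (s : R) : is_derive re_T_fun s (re_T_fun' s).
Proof.
  unfold re_T_fun, re_T_fun'; auto_derive.
  - repeat split; eexists; apply is_derive_hyp_ser; auto.
  - rewrite !Derive_hyp_ser by auto; ring.
Qed.

Lemma re_T_fun_1_pos : Re z = 0 -> Im z <> 0 -> 0 < re_T_fun 1.
Proof.
  intros Hre Him; apply (euler_ineq_pos (2 * g) re_T_fun re_T_fun').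
  - exact is_derive_re_T_fun.
  - unfold re_T_fun; rewrite !hyp_ser_at_0, re_pow_0, im_pow_0; field; exact Him.
  - unfold re_T_fun'; rewrite !hyp_ser_at_0, !hyp_ser_deriv_at_0, re_pow_0, im_pow_0, re_pow_1,
      im_pow_1, Hre by exact b_pos.
    replace (1 ^ 2 + 0 ^ 2 + 2 * 0 * (1 * ((1 + g) / b * 0) + 0 * ((1 + g) / b * Im z)) +
      2 * g / Im z * ((1 + g) / b * 0 * 0 + 1 * (g / b * Im z) - (1 + g) / b * Im z * 1
                      - 0 * (g / b * 0)))
      with (1 / b) by (field; lra).
    apply Rdiv_lt_0_compat; lra.
  - intros s Hs.
    assert (Heuler : s * re_T_fun' s + 2 * g * re_T_fun s = s * (V1 s ^ 2 + V2 s ^ 2)).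
    { unfold re_T_fun', re_T_fun.
      transitivity (s * (V1 s ^ 2 + V2 s ^ 2) + 2 * s * (V1 s * (s * V1' s) + V2 s * (s * V2' s))
        + 2 * g / Im z * ((s * V1' s) * U2 s + V1 s * (s * U2' s) - (s * V2' s) * U1 s
                          - V2 s * (s * U1' s)) + 2 * g * re_T_fun s); [unfold re_T_fun; ring|].
      rewrite !ode_U, ode_V1, ode_V2, Hre by auto; unfold re_T_fun; field; exact Him. }
    rewrite Heuler; pose proof (pow2_ge_0 (V1 s)); pose proof (pow2_ge_0 (V2 s)).
    apply Rmult_le_pos; lra.
Qed.

Lemma hyp1F1_mod2_diff :
  Cmod (hyp1F1 (RtoC g) (RtoC b) z) ^ 2 - Cmod (hyp1F1 (RtoC (1 + g)) (RtoC b) z) ^ 2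
  = mod2_diff 1.
Proof. rewrite !Cmod2_alt, !hyp1F1_RtoC by exact b_pos; unfold mod2_diff; simpl; ring. Qed.

Lemma Tq_components (a : R) : z = Cmult (RtoC a) Ci -> a <> 0 ->
  Im (Tq g a) = - b * g * mod2_diff 1 / a /\ Re (Tq g a) = b * re_T_fun 1.
Proof.
  intros Hz Ha.
  assert (Hconj : Cmult (RtoC (- a)) Ci = Cconj z)
    by (rewrite Hz; apply injective_projections; simpl; ring).
  assert (Hre : Re z = 0) by (rewrite Hz; simpl; ring).
  assert (Him : Im z = a) by (rewrite Hz; simpl; ring).
  unfold Tq; rewrite <- Hz, Hconj, !hyp1F1_conj, !hyp1F1_RtoC by lra.
  destruct (deriv_U_raise 1) as [DU1 DU2]; destruct (deriv_V_raise 1) as [DV1 DV2].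
  pose proof (ode_U (re_pow z) 1 geom_re) as OU1; pose proof (ode_U (im_pow z) 1 geom_im) as OU2.
  pose proof (ode_V1 1) as OV1; pose proof (ode_V2 1) as OV2.
  rewrite Hre, Him in *; rewrite !Rmult_1_l in OU1, OU2, OV1, OV2.
  rewrite OU1 in DU1; rewrite OU2 in DU2; rewrite OV1 in DV1; rewrite OV2 in DV2.
  (* the ODEs turn the raised series (1+g) E and g F into expressions in U and V *)
  assert (HE1 : (1 + g) * a * E1 1 = b * (g * (U2 1 - V2 1) + a * V1 1)) by lra.
  assert (HE2 : (1 + g) * a * E2 1 = - b * (g * (U1 1 - V1 1) - a * V2 1)) by lra.
  assert (HF1 : g * a * F1 1 = b * g * (V2 1 - U2 1)) by lra.
  assert (HF2 : g * a * F2 1 = - b * g * (V1 1 - U1 1)) by lra.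
  unfold mod2_diff, re_T_fun; rewrite Him; simpl; split; apply (Rmult_eq_reg_l a); auto.
  - transitivity (V1 1 * ((1 + g) * a * E2 1) - V2 1 * ((1 + g) * a * E1 1)
                  - U1 1 * (g * a * F2 1) + U2 1 * (g * a * F1 1)); [ring|].
    rewrite HE1, HE2, HF1, HF2; field; exact Ha.
  - transitivity (V1 1 * ((1 + g) * a * E1 1) + V2 1 * ((1 + g) * a * E2 1)
                  - U1 1 * (g * a * F1 1) - U2 1 * (g * a * F2 1)); [ring|].
    rewrite HE1, HE2, HF1, HF2; field; exact Ha.
Qed.

End Kummer_pair.

Theorem lemma2p4 (g : R) (hg : -1/2 < g) :
  (forall a : C, Im a <> 0 ->
     0 < (2 * g + 1) *
         ((Cmod (hyp1F1 (RtoC g) (RtoC (2 * g + 1)) (Cmult Ci a))) ^ 2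
          - (Cmod (hyp1F1 (RtoC (1 + g)) (RtoC (2 * g + 1)) (Cmult Ci a))) ^ 2)
         / (2 * Im a)) /\
  (forall a : R, Im (Tq g a) = 0 /\ 0 < Re (Tq g a)).
Proof.
  split.
  - intros a Ha; rewrite hyp1F1_mod2_diff by exact hg.
    assert (Hre : Re (Cmult Ci a) = - Im a) by (destruct a; simpl; ring).
    destruct (Rlt_or_le (Im a) 0) as [Hneg|Hpos].
    + pose proof (mod2_diff_1_neg g (Cmult Ci a) hg ltac:(lra)).
      replace ((2 * g + 1) * mod2_diff g (Cmult Ci a) 1 / (2 * Im a))
        with ((2 * g + 1) * - mod2_diff g (Cmult Ci a) 1 / (2 * - Im a)) by (field; lra).
      apply Rdiv_lt_0_compat; [apply Rmult_lt_0_compat|]; lra.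
    + pose proof (mod2_diff_1_pos g (Cmult Ci a) hg ltac:(lra)).
      apply Rdiv_lt_0_compat; [apply Rmult_lt_0_compat|]; lra.
  - intros a; destruct (Req_dec a 0) as [->|Ha].
    + rewrite Tq_at_0 by exact hg; simpl; split; [reflexivity|lra].
    + destruct (Tq_components g (Cmult (RtoC a) Ci) hg a eq_refl Ha) as [-> ->].
      rewrite mod2_diff_1_zero by (auto; simpl; ring).
      split; [field; exact Ha|].
      apply Rmult_lt_0_compat; [lra|apply re_T_fun_1_pos; auto; simpl; [ring|lra]].
Qed.
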